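(* For every integer $n\ge 1$, the number of Dumont permutations of the first kind of length $2n$ that avoid the pattern $213$ equals the Catalan number $C_{n-1}=\frac{1}{n}\binom{2n-2}{n-1}$, i.e. $|\mathfrak D^1_{2n}(213)|=C_{n-1}$.
   Context: A Dumont permutation of the first kind of length $2n$ is a permutation $\pi\in\mathfrak S_{2n}$ such that for every $i=1,\dots,2n$: if $\pi(i)$ is even then $i<2n$ and $\pi(i)>\pi(i+1)$; if $\pi(i)$ is odd then $i=2n$ or $\pi(i)<\pi(i+1)$. $\mathfrak D^1_{2n}$ denotes the set of these. A permutation $\sigma$ contains a pattern $\tau\in\mathfrak S_k$ if some subsequence $(\sigma(i_1),\dots,\sigma(i_k))$, $i_1<\dots<i_k$, is order-isomorphic to $\tau$; otherwise $\sigma$ avoids $\tau$. $\mathfrak D^1_{2n}(T)$ denotes the set of permutations in $\mathfrak D^1_{2n}$ avoiding every pattern in $T$. *)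

From mathcomp Require Import all_boot all_fingroup.
Set Implicit Arguments. Unset Strict Implicit. Unset Printing Implicit Defensive.

(* Permutations of length m are {perm 'I_m}; position i : 'I_m stands for the
   1-based position i+1, and value s i stands for the 1-based value (s i)+1.
   Hence "pi(i) is even" (1-based) is  odd (s i)  (0-based), and
   "i < 2n" (1-based) is  i.+1 < m  (0-based). *)

Definition contains_pattern (m k : nat) (s : {perm 'I_m}) (t : {perm 'I_k}) : bool :=
  [exists f : {ffun 'I_k -> 'I_m},
    [forall a : 'I_k, forall b : 'I_k, (a < b)%N ==> (f a < f b)%N] &&
    [forall a : 'I_k, forall b : 'I_k, (s (f a) < s (f b))%N == (t a < t b)%N]].

Definition avoids_pattern (m k : nat) (s : {perm 'I_m}) (t : {perm 'I_k}) : bool :=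
  ~~ contains_pattern s t.

(* Dumont permutation of the first kind (for m = 2n), positions/values 0-based:
   - if the (1-based) value at i is even then i is not last and s i > s (i+1);
   - if the (1-based) value at i is odd then i is last or s i < s (i+1). *)
Definition dumont1 (m : nat) (s : {perm 'I_m}) : bool :=
  [forall i : 'I_m,
    (odd (s i) ==> [exists j : 'I_m, (j == i.+1 :> nat) && (s j < s i)%N]) &&
    (~~ odd (s i) ==> [forall j : 'I_m, (j == i.+1 :> nat) ==> (s i < s j)%N])].

(* the pattern 213 as a permutation of 'I_3 (0-based: 1 0 2) *)
Definition pat213 : {perm 'I_3} :=
  tperm (Ordinal (isT : (0 < 3)%N)) (Ordinal (isT : (1 < 3)%N)).

Definition catalan (k : nat) : nat := 'C(2 * k, k) %/ k.+1.

From mathcomp Require Import all_boot all_fingroup zify.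
Set Implicit Arguments. Unset Strict Implicit. Unset Printing Implicit Defensive.

(* In a 213-avoiding Dumont permutation of length 2n+2 the two largest values are adjacent,
   2n+1 immediately followed by 2n+2, and everything before them is an increasing run of odd
   values (a descent there would complete a 213 with 2n+1).  Deleting the pair
   leaves a 213-avoiding Dumont permutation of length 2n; conversely the pair may be inserted
   into such a permutation at any position up to its first even value.  The inserted 2n+2 then
   becomes the first even value, so a permutation with j admissible positions has children
   with 2, 3, ..., j+1 admissible positions.  This is the Catalan generating tree with root (1)
   and rule (j) -> (2)(3)...(j+1): the number of nodes at depth k with label > q obeys the
   ballot recurrence, whence C(2k,k) - C(2k,k+1) = C_k nodes at depth k.
   Values are 0-based throughout, so the paper's even values are the odd ones here. *)

Definition dumont_step (x y : nat) : bool := if odd x then y < x else x < y.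

Definition dumont_seq (s : seq nat) : bool :=
  if s is x :: t then path dumont_step x t && ~~ odd (last x t) else true.

(* No occurrence of 213 in [x :: t] has [x] as its "2". *)
Fixpoint no213_head (x : nat) (t : seq nat) : bool :=
  if t is y :: t' then
    if y < x then all (fun z => z <= x) t' else no213_head x t'
  else true.

Fixpoint avoids213 (s : seq nat) : bool :=
  if s is x :: t then no213_head x t && avoids213 t else true.

Lemma dumont_seq_nthP s : dumont_seq s <-> forall i, i < size s ->
  (odd (nth 0 s i) -> i.+1 < size s /\ nth 0 s i.+1 < nth 0 s i) /\
  (~~ odd (nth 0 s i) -> i.+1 < size s -> nth 0 s i < nth 0 s i.+1).
Proof.
case: s => [|x t] /=; first by split.
rewrite (last_nth 0); split.
  case/andP => /(pathP 0) step_t even_last i lt_i.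
  have [lt_it | ge_it] := ltnP i (size t).
    by move: (step_t i lt_it); rewrite /dumont_step; case: (odd _) => /= step; split.
  have -> : i = size t by lia.
  by rewrite (negbTE even_last); split => // _; lia.
move=> steps; apply/andP; split.
  apply/(pathP 0) => i lt_it; have [odd_step even_step] := steps i (ltnW lt_it).
  by rewrite /dumont_step; case: ifP => odd_i; [case: odd_step | apply: even_step; rewrite ?odd_i].
have [odd_step _] := steps (size t) (ltnSn _).
by apply/negP => /odd_step []; rewrite ltnn.
Qed.

Lemma no213_head_nthP x t : no213_head x t <->
  forall j k, j < k -> k < size t -> ~~ ((nth 0 t j < x) && (x < nth 0 t k)).
Proof.
elim: t => [|y t IH] /=; first by split => // _ j k; lia.
split.
  case: ifP => lt_yx.
    move/allP => le_t [|j] [|k] //= _ lt_k; apply/negP => /andP[_ lt_x];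
    by move: (le_t _ (mem_nth 0 lt_k)); rewrite leqNgt lt_x.
  move/IH => no213 [|j] [|k] //= lt_jk lt_k; first by rewrite lt_yx.
  exact: no213.
move=> no213; case: ifP => lt_yx.
  apply/allP => z /(nthP 0) [k lt_k <-].
  by have := no213 0 k.+1 isT lt_k; rewrite /= lt_yx /=; lia.
by apply/IH => j k lt_jk lt_k; apply: (no213 j.+1 k.+1).
Qed.

Lemma avoids213_nthP s : avoids213 s <-> forall i j k, i < j -> j < k -> k < size s ->
  ~~ ((nth 0 s j < nth 0 s i) && (nth 0 s i < nth 0 s k)).
Proof.
elim: s => [|x t IH] /=; first by split => // _ i j k; lia.
split.
  case/andP => /no213_head_nthP hd /IH tl [|i] [|j] [|k] //= lt_ij lt_jk lt_k.
    exact: hd.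
  exact: tl.
move=> no213; apply/andP; split.
  by apply/no213_head_nthP => j k lt_jk lt_k; apply: (no213 0 j.+1 k.+1).
by apply/IH => i j k lt_ij lt_jk lt_k; apply: (no213 i.+1 j.+1 k.+1).
Qed.

Definition seq_of_perm m (s : {perm 'I_m}) : seq nat := [seq val (s i) | i <- enum 'I_m].

Lemma size_seq_of_perm m (s : {perm 'I_m}) : size (seq_of_perm s) = m.
Proof. by rewrite size_map size_enum_ord. Qed.

Lemma nth_seq_of_perm m (s : {perm 'I_m}) (i : 'I_m) : nth 0 (seq_of_perm s) i = s i.
Proof. by rewrite (nth_map i) ?size_enum_ord // nth_ord_enum. Qed.

Lemma nth_seq_of_perm_lt m (s : {perm 'I_m}) i (lt_i : i < m) :
  nth 0 (seq_of_perm s) i = s (Ordinal lt_i).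
Proof. by rewrite -nth_seq_of_perm. Qed.

Lemma seq_of_perm_inj m : injective (@seq_of_perm m).
Proof.
move=> s1 s2 eq_s; apply/permP => i; apply/val_inj.
by have := congr1 (nth 0 ^~ i) eq_s; rewrite /= !nth_seq_of_perm.
Qed.

Lemma perm_eq_seq_of_perm m (s : {perm 'I_m}) : perm_eq (seq_of_perm s) (iota 0 m).
Proof.
apply: uniq_perm (iota_uniq _ _) _.
  by rewrite map_inj_uniq ?enum_uniq // => i j /val_inj /perm_inj.
move=> x; rewrite mem_iota add0n /=; apply/mapP/idP => [[i _ ->] | lt_x]; first exact: ltn_ord.
by exists ((s^-1)%g (Ordinal lt_x)); rewrite ?mem_enum ?permKV.
Qed.

Lemma seq_of_perm_onto m (l : seq nat) :
  perm_eq l (iota 0 m) -> exists s : {perm 'I_m}, seq_of_perm s = l.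
Proof.
move=> perm_l.
have size_l : size l = m by rewrite (perm_size perm_l) size_iota.
have uniq_l : uniq l by rewrite (perm_uniq perm_l) iota_uniq.
pose f (i : 'I_m) : 'I_m := insubd i (nth 0 l i).
have val_f i : val (f i) = nth 0 l i.
  rewrite val_insubd; have : nth 0 l i \in l by rewrite mem_nth ?size_l.
  by rewrite (perm_mem perm_l) mem_iota /= => ->.
have inj_f : injective f.
  move=> i j /(congr1 val); rewrite !val_f => /eqP.
  by rewrite nth_uniq ?size_l // => /eqP /val_inj.
exists (perm inj_f); apply: (@eq_from_nth _ 0); rewrite size_seq_of_perm ?size_l //.
by move=> i lt_i; rewrite nth_seq_of_perm_lt permE val_f.
Qed.

Lemma dumont1_seq m (s : {perm 'I_m}) : dumont1 s = dumont_seq (seq_of_perm s).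
Proof.
apply/forallP/idP => [dum | /dumont_seq_nthP steps i].
  apply/dumont_seq_nthP => i; rewrite size_seq_of_perm => lt_i.
  have /andP[/implyP odd_step /implyP even_step] := dum (Ordinal lt_i).
  rewrite nth_seq_of_perm_lt.
  split => [/odd_step /existsP[j /andP[/eqP def_j lt_j]] | /even_step /forallP even_i lt_i1].
    by rewrite -def_j nth_seq_of_perm.
  by rewrite nth_seq_of_perm_lt; have /implyP := even_i (Ordinal lt_i1); apply.
have lt_i : i < size (seq_of_perm s) by rewrite size_seq_of_perm.
have [odd_step even_step] := steps i lt_i.
rewrite nth_seq_of_perm in odd_step even_step.
apply/andP; split; apply/implyP => par.
  have [lt_i1 lt_s] := odd_step par; rewrite size_seq_of_perm in lt_i1.
  rewrite nth_seq_of_perm_lt in lt_s.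
  by apply/existsP; exists (Ordinal lt_i1); rewrite eqxx.
apply/forallP => j; apply/implyP => /eqP def_j.
by rewrite -(nth_seq_of_perm s j) def_j even_step // -def_j size_seq_of_perm.
Qed.

Lemma pat213E (a : 'I_3) : nat_of_ord (pat213 a) = nth 0 [:: 1; 0; 2] a.
Proof. by case: a => [[|[|[|a]]] lt_a] //; rewrite /pat213 permE. Qed.

Lemma contains213P m (s : {perm 'I_m}) : reflect
  (exists i j k : 'I_m, [/\ i < j, j < k & (s j < s i) && (s i < s k)])
  (contains_pattern s pat213).
Proof.
apply: (iffP existsP) => [[f /andP[/forallP incr /forallP iso]] | [i [j [k [lt_ij lt_jk pat]]]]].
  have o0 : 0 < 3 by []. have o1 : 1 < 3 by []. have o2 : 2 < 3 by [].
  exists (f (Ordinal o0)), (f (Ordinal o1)), (f (Ordinal o2)); split.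
  - by move/forallP: (incr (Ordinal o0)) => /(_ (Ordinal o1)) /implyP; apply.
  - by move/forallP: (incr (Ordinal o1)) => /(_ (Ordinal o2)) /implyP; apply.
  - move/forallP: (iso (Ordinal o1)) => /(_ (Ordinal o0)); rewrite !pat213E /= => /eqP ->.
    by move/forallP: (iso (Ordinal o0)) => /(_ (Ordinal o2)); rewrite !pat213E /= => /eqP ->.
exists [ffun a : 'I_3 => nth i [:: i; j; k] a].
apply/andP; split; apply/forallP => a; apply/forallP => b; rewrite !ffunE ?pat213E.
  by apply/implyP; case: a => [[|[|[|a]]] lt_a] //; case: b => [[|[|[|b]]] lt_b] //= _; lia.
by case: a => [[|[|[|a]]] lt_a] //; case: b => [[|[|[|b]]] lt_b] //=; apply/eqP; lia.
Qed.

Lemma avoids_pattern213_seq m (s : {perm 'I_m}) :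
  avoids_pattern s pat213 = avoids213 (seq_of_perm s).
Proof.
apply/idP/idP => [av | /avoids213_nthP no213].
  apply/avoids213_nthP => i j k lt_ij lt_jk; rewrite size_seq_of_perm => lt_k.
  have lt_j : j < m by lia.
  have lt_i : i < m by lia.
  rewrite !nth_seq_of_perm_lt; apply/negP => pat; move/contains213P: av; apply.
  by exists (Ordinal lt_i), (Ordinal lt_j), (Ordinal lt_k).
apply/contains213P => -[i [j [k [lt_ij lt_jk]]]]; apply/negP.
by have := no213 i j k lt_ij lt_jk; rewrite size_seq_of_perm !nth_seq_of_perm; apply.
Qed.

Lemma card_perm_seq_pred m (P : pred (seq nat)) (ls : seq (seq nat)) : uniq ls ->
    (forall l, (l \in ls) = perm_eq l (iota 0 m) && P l) ->
  #|[set s : {perm 'I_m} | P (seq_of_perm s)]| = size ls.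
Proof.
move=> uniq_ls mem_ls; rewrite cardE -(size_map (@seq_of_perm m)).
apply/perm_size/uniq_perm => [|//|l].
  by rewrite map_inj_uniq ?enum_uniq //; apply: seq_of_perm_inj.
rewrite mem_ls; apply/mapP/andP => [[s] | [/seq_of_perm_onto [s <-] P_s]].
  by rewrite mem_enum inE => P_s ->; rewrite perm_eq_seq_of_perm.
by exists s; rewrite ?mem_enum ?inE.
Qed.

Lemma no213_head_all x t : all (fun z => z <= x) t -> no213_head x t.
Proof. by elim: t => //= y t IH /andP[_ le_tx]; case: ifP => // _; apply: IH. Qed.

Lemma no213_head_catl x u w :
  all (fun z => x < z) u -> no213_head x (u ++ w) = no213_head x w.
Proof. by elim: u => //= y u IH /andP[lt_xy /IH]; rewrite ltnNge ltnW. Qed.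

Lemma no213_head_subseq x t1 t2 :
  subseq t1 t2 -> no213_head x t2 -> no213_head x t1.
Proof.
have sub_le s1 s2 : subseq s1 s2 -> all (fun z => z <= x) s2 -> all (fun z => z <= x) s1.
  by move=> /mem_subseq sub12 /allP le2; apply/allP => z /sub12 /le2.
elim: t2 t1 => [|y t2 IH] [|z t1] //= sub12.
case: eqP sub12 => [-> sub12 | _ sub12]; case: ifP => _ hd.
- exact: sub_le hd.
- exact: IH hd.
- exact: no213_head_all (sub_le _ _ sub12 hd).
- exact: IH _ sub12 hd.
Qed.

Lemma avoids213_subseq s1 s2 : subseq s1 s2 -> avoids213 s2 -> avoids213 s1.
Proof.
elim: s2 s1 => [|y s2 IH] [|x s1] //= sub12 /andP[hd tl].
case: eqP sub12 => [-> sub12 | _ sub12]; last exact: IH sub12 tl.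
by rewrite (no213_head_subseq sub12 hd) (IH _ sub12 tl).
Qed.

Lemma avoids213_pattern s x y z :
  avoids213 s -> subseq [:: x; y; z] s -> ~~ ((y < x) && (x < z)).
Proof.
move=> av /avoids213_subseq /(_ av) /= /andP[+ _].
by case: ltnP => //= _; rewrite andbT; case: leqP.
Qed.

Lemma avoids213_insert u v a b : sorted ltn u -> all (fun z => z < a) (u ++ v) ->
  a < b -> avoids213 (u ++ v) -> avoids213 (u ++ [:: a, b & v]).
Proof.
elim: u => /= [|x u IH] sorted_u lt_a lt_ab.
  move=> ->; rewrite ltnNge (ltnW lt_ab) /= !andbT.
  by apply/andP; split; apply/no213_head_all/(sub_all _ lt_a) => z /ltnW //; lia.
case/andP: lt_a => lt_xa lt_a /andP[hd tl].
have lt_xu : all (fun z => x < z) u by apply: order_path_min ltn_trans sorted_u.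
rewrite IH ?(path_sorted sorted_u) // andbT no213_head_catl //=.
rewrite ltnNge (ltnW lt_xa) /= ltnNge (leq_trans (ltnW lt_xa) (ltnW lt_ab)) /=.
by rewrite -(no213_head_catl v lt_xu).
Qed.

Lemma last_mem (T : eqType) (x : T) s : s != [::] -> last x s \in s.
Proof. by case: s => //= y s _; apply: mem_last. Qed.

Lemma dumont_seq_adjacent s x y t : dumont_seq (s ++ [:: x, y & t]) -> dumont_step x y.
Proof.
case: s => /= [|z s]; first by case/andP => /andP[].
by rewrite cat_path => /andP[/andP[_ /= /and3P[]]].
Qed.

Lemma dumont_seq_last s x : dumont_seq (s ++ [:: x]) -> ~~ odd x.
Proof. by case: s => [|y s] //= /andP[_]; rewrite last_cat. Qed.

Lemma dumont_seq_insert u a y v : ~~ odd a -> y <= a ->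
    (u != [::] -> dumont_step (last a u) a) ->
  dumont_seq (u ++ y :: v) -> dumont_seq (u ++ [:: a, a.+1, y & v]).
Proof.
move=> even_a le_ya.
have step_a1 : dumont_step a a.+1 by rewrite /dumont_step (negbTE even_a).
have step_1y : dumont_step a.+1 y by rewrite /dumont_step /= even_a ltnS.
case: u => [_ | x u /(_ isT) /= step_a]; first by rewrite /= step_a1 step_1y.
rewrite /= !cat_path !last_cat /= step_a step_a1 step_1y.
by case/andP => /andP[-> /andP[_ ->]] ->.
Qed.

Lemma dumont_seq_remove u a b y v : (u != [::] -> dumont_step (last y u) y) ->
  dumont_seq (u ++ [:: a, b, y & v]) -> dumont_seq (u ++ y :: v).
Proof.
case: u => [_ | x u /(_ isT) /= step_y]; first by move=> /= /andP[/and3P[_ _ ->] ->].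
by rewrite /= !cat_path !last_cat /= step_y => /andP[/andP[-> /and4P[_ _ _ ->]] ->].
Qed.

Lemma dumont_even_prefix_sorted u w :
  dumont_seq (u ++ w) -> all (fun z => ~~ odd z) u -> sorted ltn u.
Proof.
case: u => //= x u; rewrite cat_path => /andP[/andP[+ _] _].
elim: u x => //= y u IH x /andP[step_xy path_yu] /and3P[even_x even_y even_u].
move: step_xy; rewrite /dumont_step (negbTE even_x) => ->.
by apply: IH; rewrite ?even_y.
Qed.

Lemma dumont213_odd_before_ge u a w z : dumont_seq (u ++ a :: w) ->
  avoids213 (u ++ a :: w) -> z \in u -> odd z -> a <= z.
Proof.
move=> + + zu; case/splitPr: zu => u1 u2; rewrite -catA /=.
case: u2 => [|y u2] dum av odd_z.
  by move: (dumont_seq_adjacent dum); rewrite /dumont_step odd_z; apply: ltnW.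
move: (dumont_seq_adjacent dum); rewrite /dumont_step odd_z => lt_yz.
have : subseq [:: z; y; a] (u1 ++ [:: z, y & u2 ++ a :: w]).
  apply: subseq_trans (suffix_subseq u1 _).
  by rewrite /= !eqxx sub1seq mem_cat inE eqxx orbT.
by move/(avoids213_pattern av); rewrite lt_yz -leqNgt.
Qed.

Lemma avoids213_next_gt u y v x : uniq (u ++ y :: v) ->
  avoids213 (u ++ y :: v) -> x \in u -> x.+1 \in y :: v -> x < y.
Proof.
move=> uniq_uyv av xu; rewrite inE => /predU1P[-> // | xv].
have y_notin_u : y \notin u.
  by move: uniq_uyv; rewrite cat_uniq => /and3P[_ /hasPn /(_ y (mem_head _ _)) ->].
have : subseq [:: x; y; x.+1] (u ++ y :: v).
  case/splitPr: xu => u1 u2; rewrite -catA /=.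
  apply: subseq_trans (suffix_subseq u1 _).
  by rewrite /= eqxx; apply: subseq_trans (suffix_subseq u2 _); rewrite /= eqxx sub1seq.
move/(avoids213_pattern av); rewrite ltnSn andbT -leqNgt leq_eqVlt => /orP[/eqP eq_xy|] //.
by move: y_notin_u; rewrite -eq_xy xu.
Qed.

(** * Inserting and removing the two largest values *)

Definition dumont213 (n : nat) (s : seq nat) : bool :=
  [&& perm_eq s (iota 0 (2 * n)), dumont_seq s & avoids213 s].

Definition slots (s : seq nat) : nat := (find odd s).+1.

Definition insert_top (a : nat) (s : seq nat) (p : nat) : seq nat :=
  take p s ++ [:: a, a.+1 & drop p s].

Lemma iota_double_succ n : iota 0 (2 * n.+1) = iota 0 (2 * n) ++ [:: 2 * n; (2 * n).+1].
Proof. by rewrite (_ : 2 * n.+1 = 2 * n + 2) ?iotaD //; lia. Qed.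

Lemma perm_eq_insert2 (u v : seq nat) a b : perm_eq (u ++ [:: a, b & v]) ((u ++ v) ++ [:: a; b]).
Proof. by rewrite -catA perm_cat2l -[[:: a, b & v]]/([:: a; b] ++ v) perm_catC. Qed.

Lemma slots_insert_top a s p : ~~ odd a -> p < slots s -> slots (insert_top a s p) = p.+2.
Proof.
rewrite /slots /insert_top ltnS => even_a le_p.
have le_p_size : p <= size s by apply: leq_trans le_p (find_size _ _).
rewrite find_cat has_take_leq // ltnNge le_p /= size_takel //= (negbTE even_a) /=.
by rewrite addn1.
Qed.

Lemma dumont213_insert n s p : dumont213 n.+1 s -> p < slots s ->
  dumont213 n.+2 (insert_top (2 * n.+1) s p).
Proof.
set a := 2 * n.+1; case/and3P => perm_s dum av; rewrite /slots ltnS => le_p.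
have even_a : ~~ odd a by rewrite oddM.
have lt_a : all (fun z => z < a) s.
  by apply/allP => z; rewrite (perm_mem perm_s) mem_iota.
have odd_s : has odd s by apply/hasP; exists 1; rewrite ?(perm_mem perm_s) ?mem_iota //=; lia.
have lt_p_size : p < size s by apply: leq_ltn_trans le_p _; rewrite -has_find.
have even_take : all (fun z => ~~ odd z) (take p s).
  by rewrite all_predC has_take_leq ?ltnNge ?le_p // ltnW.
have lt_take : all (fun z => z < a) (take p s).
  by apply/allP => z /mem_take /(allP lt_a).
rewrite /insert_top; apply/and3P; split.
- rewrite iota_double_succ; apply: perm_trans (perm_eq_insert2 _ _ _ _) _.
  by rewrite perm_cat2r cat_take_drop.
- rewrite (drop_nth 0 lt_p_size); apply: dumont_seq_insert => //.
  + by apply/ltnW/(allP lt_a)/mem_nth.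
  + move=> /(last_mem a) take_last; rewrite /dumont_step.
    by rewrite (negbTE (allP even_take _ take_last)) (allP lt_take).
  + by rewrite -(drop_nth 0 lt_p_size) cat_take_drop.
- apply: avoids213_insert; rewrite ?cat_take_drop //.
  by apply: (dumont_even_prefix_sorted (w := drop p s)) even_take; rewrite cat_take_drop.
Qed.

Lemma dumont213_top_adjacent n s : dumont213 n.+2 s ->
  exists u y v, s = u ++ [:: 2 * n.+1, (2 * n.+1).+1, y & v].
Proof.
set a := 2 * n.+1; case/and3P => perm_s dum av.
have mem_s x : (x \in s) = (x < a.+2) by rewrite (perm_mem perm_s) mem_iota; lia.
have a_s : a \in s by rewrite mem_s.
move: mem_s dum av; case/splitPr: a_s => u w mem_s dum av.
case: w => [|y w] in mem_s dum av *.
  have : 1 \in u ++ [:: a] by rewrite mem_s; lia.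
  have lt_1a : 1 < a by rewrite /a; lia.
  rewrite mem_cat inE orbC eqn_leq [a <= 1]leqNgt lt_1a andbF /= => one_u.
  by have := dumont213_odd_before_ge dum av one_u isT; rewrite leqNgt lt_1a.
have def_y : y = a.+1.
  move: (dumont_seq_adjacent dum); rewrite /dumont_step oddM /= => lt_ay.
  by apply/eqP; rewrite eqn_leq lt_ay -ltnS -mem_s mem_cat !inE eqxx !orbT.
subst y; case: w => [|y v] in mem_s dum av *; last by exists u, y, v.
by move: dum; rewrite -cat_rcons => /dumont_seq_last; rewrite oddS /a oddM.
Qed.

Lemma dumont213_remove_top n u y v :
  dumont213 n.+2 (u ++ [:: 2 * n.+1, (2 * n.+1).+1, y & v]) ->
  dumont213 n.+1 (u ++ y :: v) /\ size u < slots (u ++ y :: v).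
Proof.
set a := 2 * n.+1; case/and3P => perm_s dum av.
have perm_uyv : perm_eq (u ++ y :: v) (iota 0 (2 * n.+1)).
  rewrite -(perm_cat2r [:: a; a.+1]) -iota_double_succ.
  by apply: perm_trans perm_s; rewrite perm_sym perm_eq_insert2.
have uniq_uyv : uniq (u ++ y :: v) by rewrite (perm_uniq perm_uyv) iota_uniq.
have mem_uyv z : (z \in u ++ y :: v) = (z < a) by rewrite (perm_mem perm_uyv) mem_iota.
have even_u : all (fun z => ~~ odd z) u.
  apply/allP => z zu; apply/negP => odd_z.
  have := dumont213_odd_before_ge dum av zu odd_z.
  by rewrite leqNgt -mem_uyv mem_cat zu.
have av_uyv : avoids213 (u ++ y :: v).
  by apply: avoids213_subseq av; rewrite subseq_cat2l (suffix_subseq [:: a; a.+1]).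
have no_odd_u : has odd u = false by apply/negbTE; rewrite -all_predC.
split; last by rewrite /slots find_cat no_odd_u ltnS leq_addr.
apply/and3P; split => //; apply: dumont_seq_remove dum => u_nonempty.
have xu := last_mem y u_nonempty; set x := last y u in xu *.
have even_x := allP even_u _ xu.
rewrite /dumont_step (negbTE even_x); apply: (avoids213_next_gt uniq_uyv av_uyv xu).
(* [x.+1] is odd, hence not in [u]; so it lies after [x] and 213-avoidance forces [x < y]. *)
have : x.+1 \in u ++ y :: v.
  have : x < a by rewrite -mem_uyv mem_cat xu.
  by rewrite mem_uyv /a; move: (odd_double_half x); rewrite (negbTE even_x); lia.
by rewrite mem_cat => /orP[/(allP even_u) | //]; rewrite oddS even_x.
Qed.

Lemma insert_top_inj a s1 s2 p1 p2 : a \notin s1 -> a \notin s2 ->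
    p1 <= size s1 -> p2 <= size s2 ->
  insert_top a s1 p1 = insert_top a s2 p2 -> s1 = s2 /\ p1 = p2.
Proof.
move=> a_s1 a_s2 le_p1 le_p2 eq_ins.
have notin_take p (s : seq nat) : a \notin s -> a \notin take p s.
  by apply: contra; apply: mem_take.
have eq_p : p1 = p2.
  move: (congr1 (index a) eq_ins); rewrite /insert_top !index_cat.
  by rewrite !(negbTE (notin_take _ _ _)) // !size_takel //= eqxx !addn0.
subst p2; split=> //; rewrite -(cat_take_drop p1 s1) -(cat_take_drop p1 s2).
congr (_ ++ _).
  by move: (congr1 (take p1) eq_ins); rewrite !take_size_cat ?size_takel.
by move: (congr1 (drop 2 \o drop p1) eq_ins) => /=; rewrite !drop_size_cat ?size_takel //= !drop0.
Qed.

(* [dumont213_seqs k] consists of sequences of length [2 * k.+1]. *)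
Fixpoint dumont213_seqs (k : nat) : seq (seq nat) :=
  if k is k'.+1 then
    [seq insert_top (2 * k) s p | s <- dumont213_seqs k', p <- iota 0 (slots s)]
  else [:: [:: 1; 0]].

Lemma dumont213_one s : dumont213 1 s = (s == [:: 1; 0]).
Proof.
apply/idP/eqP => [|->] //.
by case/and3P; rewrite -mem_permutations /= !inE => /orP[] /eqP ->.
Qed.

Lemma mem_dumont213_seqs k s : (s \in dumont213_seqs k) = dumont213 k.+1 s.
Proof.
elim: k s => [|k IH] s; first by rewrite inE dumont213_one.
apply/allpairsPdep/idP => [[s' [p [s's lt_p ->]]] | dum_s].
  by rewrite IH in s's; rewrite mem_iota in lt_p; apply: dumont213_insert.
have [u [y [v def_s]]] := dumont213_top_adjacent dum_s.
rewrite def_s in dum_s *; have [dum_uyv lt_u] := dumont213_remove_top dum_s.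
exists (u ++ y :: v), (size u); rewrite IH mem_iota.
by rewrite /insert_top take_size_cat // drop_size_cat.
Qed.

Lemma uniq_dumont213_seqs k : uniq (dumont213_seqs k).
Proof.
elim: k => [|k IH] //.
apply: (allpairs_uniq_dep (T := fun=> nat)) => //; first by move=> s _; apply: iota_uniq.
move=> [s1 p1] [s2 p2] /allpairsPdep[s1' [p1' [s1k lt_p1 [eq_s1 eq_p1]]]].
move=> /allpairsPdep[s2' [p2' [s2k lt_p2 [eq_s2 eq_p2]]]] /= eq_ins.
subst s1' p1' s2' p2'.
have top_notin s : s \in dumont213_seqs k -> 2 * k.+1 \notin s.
  rewrite mem_dumont213_seqs => /and3P[perm_s _ _].
  by rewrite (perm_mem perm_s) mem_iota ltnn.
have le_size s p : p \in iota 0 (slots s) -> p <= size s.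
  by rewrite mem_iota /slots ltnS => /leq_trans; apply; apply: find_size.
have [eq_s eq_p] := insert_top_inj (top_notin _ s1k) (top_notin _ s2k)
  (le_size _ _ lt_p1) (le_size _ _ lt_p2) eq_ins.
by rewrite eq_s eq_p.
Qed.

(** * The Catalan generating tree *)

(* Labels at depth [k] of the generating tree with root (1) and rule (j) -> (2)(3)...(j+1). *)
Fixpoint catalan_level (k : nat) : seq nat :=
  if k is k'.+1 then flatten [seq iota 2 j | j <- catalan_level k'] else [:: 1].

Definition ballot (k q : nat) : nat := count (fun j => q < j) (catalan_level k).

Lemma count_gt_iota q m n : count (fun i => q < i) (iota m n) = n - (q.+1 - m).
Proof. by elim: n m => [|n IH] m //=; rewrite IH; case: (ltnP q m) => /= cmp; lia. Qed.

Lemma catalan_level_bounds k : all (fun j => 0 < j <= k.+1) (catalan_level k).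
Proof.
elim: k => [|k IH] //=; apply/allP => i /flatten_mapP[j /(allP IH) /andP[_ le_j]].
by rewrite mem_iota => /andP[le_2i lt_i]; apply/andP; split; lia.
Qed.

Lemma size_catalan_level_ballot k : size (catalan_level k) = ballot k 0.
Proof.
rewrite /ballot -count_predT; apply: eq_in_count => j.
by move/(allP (catalan_level_bounds k)) => /andP[].
Qed.

Lemma ballot_eq0 k q : k < q -> ballot k q = 0.
Proof.
move=> lt_kq; apply/eqP; rewrite -leqn0 leqNgt -has_count; apply/hasPn => j.
by move/(allP (catalan_level_bounds k)) => /andP[_ le_j]; rewrite -leqNgt; lia.
Qed.

Lemma ballot_succ k q : ballot k.+1 q = sumn [seq j - q.-1 | j <- catalan_level k].
Proof.
rewrite /ballot /= count_flatten -map_comp; congr sumn; apply: eq_map => j /=.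
by rewrite count_gt_iota; lia.
Qed.

Lemma ballot_succ0 k : ballot k.+1 0 = ballot k.+1 1.
Proof. by rewrite !ballot_succ. Qed.

Lemma ballot_rec k q : ballot k.+1 q.+1 = ballot k q + ballot k.+1 q.+2.
Proof.
rewrite !ballot_succ /ballot /=.
by elim: (catalan_level k) => //= j s ->; case: (ltnP q j) => /= cmp; lia.
Qed.

(* With [q = k - d]: the ballot number [ballot k q = 'C(2k-q, k) - 'C(2k-q, k.+1)]. *)
Lemma ballot_closed k d : d <= k -> ballot k (k - d) + 'C(k + d, k.+1) = 'C(k + d, k).
Proof.
elim: k d => [|k IHk] d; first by rewrite leqn0 => /eqP ->.
elim: d => [_ | d IHd le_dk].
  have := IHk 0 (leq0n k); rewrite !subn0 !addn0.
  rewrite (@bin_small k k.+1) // (@bin_small k.+1 k.+2) // !binn.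
  by rewrite ballot_rec (@ballot_eq0 k.+1 k.+2) // => ->.
have {}IHd := IHd (ltnW le_dk).
rewrite !addnS binS.
have [lt_dk | eq_dk] : d < k \/ d = k by lia.
  have := IHk d.+1 lt_dk.
  rewrite (_ : k + d.+1 = k.+1 + d); last by rewrite addnS addSn.
  rewrite (_ : k.+1 - d.+1 = (k - d.+1).+1); last by lia.
  rewrite ballot_rec (_ : (k - d.+1).+2 = k.+1 - d); last by lia.
  by move=> IH'; rewrite (binS (k.+1 + d) k) -IH' -IHd; lia.
subst d; have sym : 'C(k.+1 + k, k) = 'C(k.+1 + k, k.+1).
  by rewrite -bin_sub ?leq_addl // addnK.
by rewrite subnn ballot_succ0 -(subSnn k) (binS (k.+1 + k) k) sym addnA IHd.
Qed.

Lemma size_catalan_level k : size (catalan_level k) = catalan k.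
Proof.
have := ballot_closed (leqnn k); rewrite subnn addnn -mul2n => closed.
have := mul_bin_left (2 * k) k; rewrite (_ : 2 * k - k = k); last by lia.
rewrite size_catalan_level_ballot /catalan => mul_bin.
by rewrite (_ : 'C(2 * k, k) = ballot k 0 * k.+1) ?mulnK //; nia.
Qed.

Lemma map_slots_dumont213_seqs k : map slots (dumont213_seqs k) = catalan_level k.
Proof.
elim: k => [|k IH] //.
change (dumont213_seqs k.+1) with
  [seq insert_top (2 * k.+1) s p | s <- dumont213_seqs k, p <- iota 0 (slots s)].
rewrite [catalan_level _]/= map_flatten -IH -!map_comp.
congr flatten; apply: eq_map => s; rewrite /comp -map_comp.
have -> : iota 2 (slots s) = map (addn 2) (iota 0 (slots s)) by rewrite -iotaDl.
by apply/eq_in_map => p; rewrite mem_iota => lt_p; rewrite /comp slots_insert_top ?oddM.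
Qed.

Lemma size_dumont213_seqs k : size (dumont213_seqs k) = catalan k.
Proof. by rewrite -size_catalan_level -map_slots_dumont213_seqs size_map. Qed.

Theorem theorem2p1 (n : nat) : (1 <= n)%N ->
  #|[set s : {perm 'I_(2 * n)} | dumont1 s && avoids_pattern s pat213]|
  = catalan n.-1.
Proof.
case: n => [|k] // _.
rewrite -size_dumont213_seqs.
rewrite -(card_perm_seq_pred (m := 2 * k.+1) (P := fun l => dumont_seq l && avoids213 l)).
- by apply: eq_card => s; rewrite !inE dumont1_seq avoids_pattern213_seq.
- exact: uniq_dumont213_seqs.
- by move=> l; rewrite mem_dumont213_seqs.
Qed.
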